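(* Let $\lambda$ be a nonzero real number and let $r\ge 1$ be an integer. Then, as formal power series in $t$, $$-\frac{\log_{\lambda}(1-t)}{(1-t)^{r}}=\sum_{n=1}^{\infty}H_{n,\lambda}^{(r)}t^{n},$$ and $H_{0,\lambda}^{(r)}=0$.
   Context: For real $x$ and integer $k\ge0$: $(x)_{0,\lambda}=1$, $(x)_{k,\lambda}=x(x-\lambda)(x-2\lambda)\cdots(x-(k-1)\lambda)$ for $k\ge1$ (so $(1)_{k,1/\lambda}$ denotes this product with step $1/\lambda$). The degenerate logarithm is the formal power series $\log_{\lambda}(1+t)=\sum_{k=1}^{\infty}\lambda^{k-1}(1)_{k,1/\lambda}\frac{t^{k}}{k!}$ (equivalently $\log_\lambda(1+t)=((1+t)^\lambda-1)/\lambda$); it is the compositional inverse of the degenerate exponential $e_\lambda(t)=\sum_{k\ge0}(1)_{k,\lambda}t^k/k!=(1+\lambda t)^{1/\lambda}$. The degenerate harmonic numbers are $H_{0,\lambda}=0$ and $H_{n,\lambda}=\sum_{k=1}^{n}\frac{1}{\lambda}\binom{\lambda}{k}(-1)^{k-1}$ for $n\ge1$. The degenerate hyperharmonic numbers are defined by $H_{n,\lambda}^{(1)}=H_{n,\lambda}$ and $H_{n,\lambda}^{(r)}=\sum_{k=1}^{n}H_{k,\lambda}^{(r-1)}$ for $r\ge2$ (so $H^{(r)}_{0,\lambda}$ is an empty sum for $r\ge 2$). *)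

From HB Require Import structures.
From mathcomp Require Import all_boot all_order all_algebra.
Set Implicit Arguments. Unset Strict Implicit. Unset Printing Implicit Defensive.
Import Order.TTheory GRing.Theory Num.Theory.
Local Open Scope ring_scope.

Section FPS.
Variable R : fieldType.

Definition fps := nat -> R.

Definition fps_opp (a : fps) : fps := fun n => - a n.
Definition fps_mul (a b : fps) : fps :=
  fun n => \sum_(k < n.+1) a k * b (n - k)%N.
Definition fps_one : fps := fun n => if n == 0%N then 1 else 0.
Definition fps_pow (a : fps) (r : nat) : fps := iter r (fps_mul a) fps_one.
Definition fps_one_minus_t : fps :=
  fun n => if n == 0%N then 1 else if n == 1%N then -1 else 0.
Definition fps_neg_arg (a : fps) : fps := fun n => (-1) ^+ n * a n.

Fixpoint fps_inv_aux (a : fps) (n : nat) : seq R :=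
  match n with
  | 0 => [:: (a 0%N)^-1]
  | n'.+1 => let s := fps_inv_aux a n' in
             rcons s (- (a 0%N)^-1 *
                      \sum_(1 <= k < n'.+2) a k * nth 0 s (n'.+1 - k)%N)
  end.
Definition fps_inv (a : fps) : fps := fun n => nth 0 (fps_inv_aux a n) n.

Definition dfalling (x lam : R) (k : nat) : R := \prod_(i < k) (x - i%:R * lam).

(* coefficients of the degenerate logarithm log_lam(1+t) *)
Definition dlog (lam : R) : fps :=
  fun k => if k is 0 then 0
           else lam ^+ k.-1 * dfalling 1 lam^-1 k / (k`!)%:R.

Definition gbinom (x : R) (k : nat) : R := dfalling x 1 k / (k`!)%:R.

Definition dharm (lam : R) (n : nat) : R :=
  \sum_(1 <= k < n.+1) lam^-1 * gbinom lam k * (-1) ^+ k.-1.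

(* hyp lam r' n = H^{(r'+1)}_{n,lam} *)
Fixpoint hyp (lam : R) (r' : nat) (n : nat) : R :=
  match r' with
  | 0 => dharm lam n
  | r''.+1 => \sum_(1 <= k < n.+1) hyp lam r'' k
  end.
(* degenerate hyperharmonic numbers H^{(r)}_{n,lam}, meaningful for r >= 1 *)
Definition dhyperharm (lam : R) (r n : nat) : R := hyp lam r.-1 n.

End FPS.
Arguments fps_one {R}.
Arguments fps_one_minus_t {R}.

(** Multiplying a power series by 1/(1-t) = 1 + t + t^2 + ... replaces its
    coefficients by their partial sums, and 1/(1-t)^r is the r-th power of
    1/(1-t).  The coefficients of -log_lam(1-t) are the summands
    lam^-1 binom(lam, k) (-1)^(k-1) of H_{n,lam}, with constant term 0, so
    dividing by (1-t)^r sums them r times, which is exactly the recursion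
    defining H^(r)_{n,lam}.  Coefficients of products and powers of series
    are read off polynomial truncations, where the ring laws are available. *)

From HB Require Import structures.
From mathcomp Require Import all_boot all_order all_algebra.
From mathcomp Require Import ring.
Import Order.TTheory GRing.Theory Num.Theory.
Local Open Scope ring_scope.
Set Implicit Arguments. Unset Strict Implicit.

Section SeriesAlgebra.
Variable R : fieldType.
Implicit Types (a b c x : fps R) (p q : {poly R}).

Definition fps_psum a : fps R := fun n => \sum_(i < n.+1) a i.

Definition fps_geom : fps R := fun _ => 1.

Definition agree_below (N : nat) p a := forall i, (i < N)%N -> p`_i = a i.

Lemma agree_below_poly N a : agree_below N (\poly_(i < N) a i) a.
Proof. by move=> i iN; rewrite coef_poly iN. Qed.

Lemma agree_below_one N : agree_below N 1 fps_one.
Proof. by move=> [|i] _; rewrite coef1. Qed.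

Lemma agree_below_one_minus_X N : agree_below N (1 - 'X) fps_one_minus_t.
Proof.
move=> i _; rewrite coefB coef1 coefX /fps_one_minus_t.
by case: i => [|[|i]] /=; rewrite ?subr0 ?sub0r.
Qed.

Lemma agree_below_mul N p q a b :
  agree_below N p a -> agree_below N q b -> agree_below N (p * q) (fps_mul a b).
Proof.
move=> pa qb k kN; rewrite coefM; apply: eq_bigr => -[i /= ik] _.
have iN : (i < N)%N by apply: leq_ltn_trans kN.
by rewrite pa // qb //; apply: leq_ltn_trans (leq_subr i k) kN.
Qed.

Lemma agree_below_pow N p a r :
  agree_below N p a -> agree_below N (p ^+ r) (fps_pow a r).
Proof.
move=> pa; elim: r => [|r IHr]; first exact: agree_below_one.
by rewrite exprS; apply: agree_below_mul.
Qed.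

Lemma fps_psumE a n : fps_psum a n = fps_mul a fps_geom n.
Proof. by apply: eq_bigr => i _; rewrite /fps_geom mulr1. Qed.

Lemma agree_below_iter_psum N p q a j :
  agree_below N p a -> agree_below N q fps_geom ->
  agree_below N (p * q ^+ j) (iter j fps_psum a).
Proof.
move=> pa qg; elim: j => [|j IHj]; first by rewrite expr0 mulr1.
move=> k kN; rewrite exprSr mulrA /= fps_psumE.
exact: (agree_below_mul IHj qg kN).
Qed.

Lemma fps_pow0 a r : fps_pow a r 0%N = a 0%N ^+ r.
Proof.
elim: r => [|r IHr] //=.
by rewrite /fps_mul big_ord1 IHr -exprS.
Qed.

Lemma one_minus_X_mul_geom N : (1 - 'X) * \poly_(i < N) 1 = 1 - 'X^N :> {poly R}.
Proof.
rewrite -[in RHS](expr1n {poly R} N) subrXX poly_def; congr (_ * _).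
by apply: eq_bigr => i _; rewrite expr1n mul1r scale1r.
Qed.

Lemma fps_mul_pow_one_minus_t_geom r m :
  fps_mul (fps_pow fps_one_minus_t r) (fps_pow fps_geom r) m = fps_one m.
Proof.
pose q : {poly R} := \poly_(i < m.+1) 1.
have [v pow_eq] : exists v : {poly R}, (1 - 'X^(m.+1)) ^+ r = 1 + 'X^(m.+1) * v.
  elim: r => [|r [v IHv]]; first by exists 0; rewrite mulr0 addr0.
  by exists (v - 1 - 'X^(m.+1) * v); rewrite exprS IHv; ring.
have prod_agree : agree_below m.+1 ((1 - 'X) ^+ r * q ^+ r)
    (fps_mul (fps_pow fps_one_minus_t r) (fps_pow fps_geom r)).
  by apply: agree_below_mul; apply: agree_below_pow;
    [apply: agree_below_one_minus_X | apply: agree_below_poly].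
rewrite -prod_agree // -(agree_below_one (ltnSn m)).
by rewrite -exprMn one_minus_X_mul_geom pow_eq coefD coefXnM ltnSn addr0.
Qed.

Lemma size_fps_inv_aux c m : size (fps_inv_aux c m) = m.+1.
Proof. by elim: m => [|m IHm] //=; rewrite size_rcons IHm. Qed.

Lemma nth_fps_inv_aux c m j : (j <= m)%N -> nth 0 (fps_inv_aux c m) j = fps_inv c j.
Proof.
elim: m j => [|m IHm] j; first by rewrite leqn0 => /eqP ->.
rewrite leq_eqVlt => /orP [/eqP -> // | ltjm].
by rewrite /= nth_rcons size_fps_inv_aux ltjm IHm.
Qed.

Lemma fps_invS c m : fps_inv c m.+1 =
  - (c 0%N)^-1 * \sum_(0 <= k < m.+1) c k.+1 * fps_inv c (m - k)%N.
Proof.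
rewrite {1}/fps_inv /= nth_rcons size_fps_inv_aux ltnn eqxx big_add1.
congr (_ * _); apply: eq_big_nat => k /andP [_ ltkm].
by rewrite subSS nth_fps_inv_aux // leq_subr.
Qed.

Lemma fps_inv_unique c x : c 0%N != 0 ->
  (forall m, fps_mul c x m = fps_one m) -> forall m, fps_inv c m = x m.
Proof.
move=> c0 cx m; elim: m {-2}m (leqnn m) => [|m IHm] j.
  rewrite leqn0 => /eqP ->; apply: (mulfI c0).
  by have := cx 0%N; rewrite /fps_mul big_ord1 => ->; rewrite mulfV.
rewrite leq_eqVlt => /orP [/eqP -> | ]; last exact: IHm.
have := cx m.+1; rewrite /fps_mul big_ord_recl subn0 => /eqP.
rewrite addrC addr_eq0 => /eqP cxS.
rewrite fps_invS big_mkord.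
under eq_bigr => k _ do rewrite IHm ?leq_subr //.
by rewrite cxS mulrN mulNr opprK mulrA mulVf ?mul1r.
Qed.

Lemma fps_inv_pow_one_minus_t r m :
  fps_inv (fps_pow fps_one_minus_t r) m = fps_pow fps_geom r m.
Proof.
apply: fps_inv_unique; last exact: fps_mul_pow_one_minus_t_geom.
by rewrite fps_pow0 expr1n oner_eq0.
Qed.

Lemma fps_mul_inv_pow_one_minus_t a r n :
  fps_mul a (fps_inv (fps_pow fps_one_minus_t r)) n = iter r fps_psum a n.
Proof.
pose q : {poly R} := \poly_(i < n.+1) 1.
have qg : agree_below n.+1 q fps_geom by exact: agree_below_poly.
have pa : agree_below n.+1 (\poly_(i < n.+1) a i) a := agree_below_poly a.
have inv_agree : agree_below n.+1 (q ^+ r) (fps_inv (fps_pow fps_one_minus_t r)).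
  by move=> i iN; rewrite fps_inv_pow_one_minus_t (agree_below_pow _ qg).
rewrite -(agree_below_mul pa inv_agree (ltnSn n)).
exact: (agree_below_iter_psum _ pa qg (ltnSn n)).
Qed.

Lemma iter_fps_psum0 a j : a 0%N = 0 -> iter j fps_psum a 0 = 0.
Proof. by move=> a0; elim: j => [|j IHj] //=; rewrite /fps_psum big_ord1. Qed.

Lemma big_nat1_fps_psum a n : a 0%N = 0 -> \sum_(1 <= k < n.+1) a k = fps_psum a n.
Proof.
by move=> a0; rewrite /fps_psum -(big_mkord xpredT) (big_ltn (ltn0Sn n)) a0 add0r.
Qed.

End SeriesAlgebra.

Lemma dfallingM (R : fieldType) (c x lam : R) k :
  dfalling (c * x) (c * lam) k = c ^+ k * dfalling x lam k.
Proof.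
have -> : c ^+ k = \prod_(i < k) c by rewrite prodr_const card_ord.
rewrite /dfalling -big_split /=.
by apply: eq_bigr => i _; rewrite mulrBr mulrCA.
Qed.

Section DegenerateHarmonic.
Variables (R : fieldType) (lam : R).
Hypothesis lam_neq0 : lam != 0.

Lemma dlogE k : dlog lam k.+1 = lam^-1 * gbinom lam k.+1.
Proof.
have lam_dfalling : lam ^+ k.+1 * dfalling 1 lam^-1 k.+1 = dfalling lam 1 k.+1.
  by rewrite -dfallingM mulr1 mulfV.
rewrite /dlog /gbinom -lam_dfalling exprS /=.
by rewrite !mulrA mulVf ?mul1r.
Qed.

Let A : fps R := fps_opp (fps_neg_arg (dlog lam)).

Lemma coef_neg_log_one_minus_t0 : A 0%N = 0.
Proof. by rewrite /A /fps_opp /fps_neg_arg mulr0 oppr0. Qed.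

Lemma dharm_fps_psum n : dharm lam n = fps_psum A n.
Proof.
rewrite -big_nat1_fps_psum ?coef_neg_log_one_minus_t0 //.
apply: eq_big_nat => -[|k] // _.
by rewrite /A /fps_opp /fps_neg_arg dlogE exprS /=; ring.
Qed.

Lemma hyp_iter_fps_psum r' n : hyp lam r' n = iter r'.+1 (@fps_psum R) A n.
Proof.
elim: r' n => [|r' IHr'] n; first exact: dharm_fps_psum.
rewrite [LHS]/= iterS -big_nat1_fps_psum; last first.
  exact/iter_fps_psum0/coef_neg_log_one_minus_t0.
by apply: eq_big_nat => k _; rewrite IHr'.
Qed.

Lemma dhyperharm_iter_fps_psum r n :
  (0 < r)%N -> dhyperharm lam r n = iter r (@fps_psum R) A n.
Proof. by move=> r_gt0; rewrite /dhyperharm hyp_iter_fps_psum prednK. Qed.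

End DegenerateHarmonic.

Theorem theorem1 (R : realFieldType) (lam : R) (r : nat)
    (hlam : lam != 0) (hr : (1 <= r)%N) :
  (forall n : nat,
      fps_mul (fps_opp (fps_neg_arg (dlog lam)))
              (fps_inv (fps_pow fps_one_minus_t r)) n
      = if n == 0%N then 0 else dhyperharm lam r n)
  /\ dhyperharm lam r 0 = 0.
Proof.
have A0 := coef_neg_log_one_minus_t0 lam.
split=> [n|]; last by rewrite dhyperharm_iter_fps_psum ?iter_fps_psum0.
rewrite fps_mul_inv_pow_one_minus_t dhyperharm_iter_fps_psum //.
by case: eqP => [->|_]; rewrite ?iter_fps_psum0.
Qed.
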